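(* Let $\delta\in[1/3,1]$, let $\nu_-,\nu_+>0$ be fixed constants and $a_\pm=\left(\frac{(1+\delta^2)\delta}{8\nu_\pm^2}\right)^{2/5}$. Consider the fourth-order ODE $$\frac{d^{4}\overline{A_0}}{dz^{4}}=-\overline{A_0}\,(\overline{A_0}^{2}+z)$$ with data at $z=a_+$ given, for a parameter $(\overline{x_{10}},\overline{x_{20}})\in\mathbb{R}^2$, by $$\overline{A_0}=a_+^{1/2}\overline{x_{10}},\quad \overline{A_0}'=-\frac{a_+^{3/4}}{\sqrt2}(\overline{x_{10}}+\overline{x_{20}}),\quad \overline{A_0}''=a_+\overline{x_{20}},\quad \overline{A_0}'''=\frac{a_+^{5/4}}{\sqrt2}(\overline{x_{10}}-\overline{x_{20}}).$$ Then for $k_1>0$ small enough and $|(\overline{x_{10}},\overline{x_{20}})|\le k_1$, the corresponding solutions exist on the whole interval $z\in[-a_-,a_+]$, forming a 2-parameter family (parameter $(\overline{x_{10}},\overline{x_{20}})$); these solutions depend analytically on $\delta\in[1/3,1]$. *)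

From Stdlib Require Import Reals Lra.
From Coquelicot Require Import Coquelicot.
Open Scope R_scope.

Definition a_pm (delta nu : R) : R :=
  Rpower ((1 + delta ^ 2) * delta / (8 * nu ^ 2)) (2 / 5).

Definition analytic_at (g : R -> R) (x0 : R) : Prop :=
  exists r : R, 0 < r /\
  exists c : nat -> R,
    forall x : R, Rabs (x - x0) < r -> is_pseries c (x - x0) (g x).

Definition solves_ODE_on (A : R -> R) (lo hi : R) : Prop :=
  (exists eps : R, 0 < eps /\
     forall z : R, lo - eps < z < hi + eps ->
       forall k : nat, (k <= 4)%nat -> ex_derive_n A k z) /\
  (forall z : R, lo <= z <= hi ->
     Derive_n A 4 z = - A z * (A z ^ 2 + z)).

Definition initial_data (A : R -> R) (a x1 x2 : R) : Prop :=
  A a = Rpower a (1/2) * x1 /\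
  Derive_n A 1 a = - (Rpower a (3/4) / sqrt 2) * (x1 + x2) /\
  Derive_n A 2 a = a * x2 /\
  Derive_n A 3 a = (Rpower a (5/4) / sqrt 2) * (x1 - x2).

From Stdlib Require Import Reals Lra Lia.
From Coquelicot Require Import Coquelicot.
Open Scope R_scope.

(* For fixed [delta] the solution is its Taylor series at [z = a_+].  Its coefficients obey
   [rising4 p * c (p + 4) = - ((c * c * c) p + a_+ c p + c (p - 1))], and for small data a
   majorant argument bounds [c n * rho ^ n] for a weight [rho] exceeding the length of
   [-a_-, a_+], so the series converges there.  All dependence on [delta] enters through
   [a_+ ^ (k / 4) = g ^ (k / 10)], [g delta = (1 + delta ^ 2) delta / (8 nu_+ ^ 2)], and
   [g ^ (1/10)] is a power series in [delta] by the binomial series.  Running the same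
   recursion on power series in [delta], their weighted l1 norms satisfy the same majorant
   bound, so [sum_n c_n(delta) (z - a_+(delta)) ^ n] is a convergent double series, i.e. a
   power series in [delta]. *)

(** * Double series *)

Lemma sum_f_R0_le_Series (a : nat -> R) (N : nat) :
  (forall n, 0 <= a n) -> ex_series a -> sum_f_R0 a N <= Series a.
Proof.
  intros Ha Hex. apply sum_incr; auto.
  apply is_series_Reals, Series_correct, Hex.
Qed.

Lemma Series_ge0 (a : nat -> R) : (forall n, 0 <= a n) -> ex_series a -> 0 <= Series a.
Proof.
  intros Ha Hex. apply Rle_trans with (sum_f_R0 a 0); [apply Ha|].
  now apply sum_f_R0_le_Series.
Qed.

Lemma term_le_Series (a : nat -> R) (n : nat) :
  (forall n, 0 <= a n) -> ex_series a -> a n <= Series a.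
Proof.
  intros Ha Hex. apply Rle_trans with (sum_f_R0 a n); [|now apply sum_f_R0_le_Series].
  destruct n; simpl; [lra|]. assert (0 <= sum_f_R0 a n) by (apply cond_pos_sum, Ha).
  lra.
Qed.

Lemma Series_le_of_sums_le (a : nat -> R) (M : R) :
  (forall n, 0 <= a n) -> (forall N, sum_f_R0 a N <= M) -> ex_series a /\ Series a <= M.
Proof.
  intros Ha HM.
  destruct (ex_finite_lim_seq_incr (sum_f_R0 a) M) as [l Hl]; auto.
  { intros n; simpl; specialize (Ha (S n)); lra. }
  assert (Hs : is_series a l) by now apply is_series_Reals, is_lim_seq_Reals.
  split; [now exists l|].
  rewrite (is_series_unique a l Hs).
  apply (is_lim_seq_le (sum_f_R0 a) (fun _ => M) l M); auto using is_lim_seq_const.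
Qed.

Lemma ex_series_le_R (a b : nat -> R) :
  (forall n, Rabs (a n) <= b n) -> ex_series b -> ex_series a.
Proof. exact (@ex_series_le R_AbsRing R_CompleteNormedModule a b). Qed.

Lemma Series_Rabs_le (a b : nat -> R) :
  (forall n, Rabs (a n) <= b n) -> ex_series b -> Rabs (Series a) <= Series b.
Proof.
  intros Hab Hb.
  assert (Habs : ex_series (fun n => Rabs (a n))).
  { apply (ex_series_le_R _ b); auto. intros n. now rewrite Rabs_Rabsolu. }
  eapply Rle_trans; [now apply Series_Rabs|].
  apply Series_le; auto. intros n; split; auto using Rabs_pos.
Qed.

Lemma Series_sum_f_R0 (a : nat -> nat -> R) (K : nat) :
  (forall k, ex_series (fun n => a n k)) ->
  ex_series (fun n => sum_f_R0 (a n) K) /\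
  Series (fun n => sum_f_R0 (a n) K) = sum_f_R0 (fun k => Series (fun n => a n k)) K.
Proof.
  intros Ha. induction K as [|K [IHex IHeq]]; simpl; [split; auto|].
  split; [now apply (ex_series_plus (fun n => sum_f_R0 (a n) K) (fun n => a n (S K)))|].
  now rewrite Series_plus, IHeq.
Qed.

Lemma Series_swap_nonneg (a : nat -> nat -> R) :
  (forall n k, 0 <= a n k) ->
  (forall n, ex_series (a n)) -> ex_series (fun n => Series (a n)) ->
  (forall k, ex_series (fun n => a n k)) /\
  ex_series (fun k => Series (fun n => a n k)) /\
  Series (fun k => Series (fun n => a n k)) = Series (fun n => Series (a n)).
Proof.
  intros Hpos Hrow Hsum.
  assert (Hcol : forall k, ex_series (fun n => a n k)).
  { intros k. apply (ex_series_le_R _ (fun n => Series (a n))); auto.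
    intros n. rewrite Rabs_pos_eq by auto. now apply term_le_Series. }
  assert (Hrow_ge0 : forall n, 0 <= Series (a n)) by (intros; now apply Series_ge0).
  assert (Hcol_ge0 : forall k, 0 <= Series (fun n => a n k)) by (intros; now apply Series_ge0).
  destruct (Series_le_of_sums_le (fun k => Series (fun n => a n k))
              (Series (fun n => Series (a n)))) as [Hex Hle]; auto.
  { intros K. rewrite <- (proj2 (Series_sum_f_R0 a K Hcol)).
    apply Series_le; auto. intros n; split; [now apply cond_pos_sum|].
    now apply sum_f_R0_le_Series. }
  repeat split; auto. apply Rle_antisym; auto.
  apply (Series_le_of_sums_le (fun n => Series (a n))); auto.
  intros N. apply Rle_trans with (Series (fun k => sum_f_R0 (fun n => a n k) N)).
  { right; symmetry; exact (proj2 (Series_sum_f_R0 (fun k n => a n k) N Hrow)). }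
  apply Series_le; auto. intros k; split; [now apply cond_pos_sum|].
  apply (sum_f_R0_le_Series (fun n => a n k)); auto.
Qed.

Lemma Series_swap (a : nat -> nat -> R) :
  (forall n, ex_series (fun k => Rabs (a n k))) ->
  ex_series (fun n => Series (fun k => Rabs (a n k))) ->
  ex_series (fun k => Series (fun n => a n k)) /\
  Series (fun k => Series (fun n => a n k)) = Series (fun n => Series (a n)).
Proof.
  intros Hrow Hsum.
  set (pos := fun n k => (Rabs (a n k) + a n k) / 2).
  set (neg := fun n k => (Rabs (a n k) - a n k) / 2).
  assert (Hsplit : forall n k, a n k = pos n k - neg n k) by (intros; unfold pos, neg; field).
  assert (Hbound : forall b : nat -> nat -> R,
             (forall n k, 0 <= b n k <= Rabs (a n k)) ->
             (forall n, ex_series (b n)) /\ ex_series (fun n => Series (b n))).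
  { intros b Hb.
    assert (Hbrow : forall n, ex_series (b n)).
    { intros n. apply (ex_series_le_R _ (fun k => Rabs (a n k))); auto.
      intros k; rewrite Rabs_pos_eq; apply Hb. }
    split; auto. apply (ex_series_le_R _ (fun n => Series (fun k => Rabs (a n k)))); auto.
    intros n.
    rewrite Rabs_pos_eq by (apply Series_ge0; auto; apply Hb).
    apply Series_le; auto. }
  assert (Hpos_ge0 : forall n k, 0 <= pos n k <= Rabs (a n k)).
  { intros n k; unfold pos. pose proof (Rle_abs (a n k)); pose proof (Rabs_maj2 (a n k)); lra. }
  assert (Hneg_ge0 : forall n k, 0 <= neg n k <= Rabs (a n k)).
  { intros n k; unfold neg. pose proof (Rle_abs (a n k)); pose proof (Rabs_maj2 (a n k)); lra. }
  destruct (Hbound pos Hpos_ge0) as [Hprow Hpsum].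
  destruct (Hbound neg Hneg_ge0) as [Hnrow Hnsum].
  destruct (Series_swap_nonneg pos) as [Hpcol [Hpex Hpeq]]; auto; [intros; apply Hpos_ge0|].
  destruct (Series_swap_nonneg neg) as [Hncol [Hnex Hneq]]; auto; [intros; apply Hneg_ge0|].
  assert (Hcol : forall k, Series (fun n => a n k) =
                           Series (fun n => pos n k) - Series (fun n => neg n k)).
  { intros k. rewrite <- Series_minus by auto. apply Series_ext; auto. }
  assert (Hrows : forall n, Series (a n) = Series (pos n) - Series (neg n)).
  { intros n. rewrite <- Series_minus by auto. apply Series_ext; auto. }
  split.
  - apply (ex_series_ext (fun k => Series (fun n => pos n k) - Series (fun n => neg n k))).
    { intros k; now rewrite Hcol. }
    now apply (ex_series_minus (fun k => Series (fun n => pos n k))).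
  - rewrite (Series_ext _ _ Hcol), (Series_ext _ _ Hrows), !Series_minus by auto.
    now rewrite Hpeq, Hneq.
Qed.

(** * Weighted l1 norms of coefficient sequences *)

Lemma is_series_finite_support (a : nat -> R) (N : nat) :
  (forall k, (N < k)%nat -> a k = 0) -> is_series a (sum_f_R0 a N).
Proof.
  intros Ha. apply is_series_Reals. intros eps Heps. exists N. intros n Hn.
  replace (sum_f_R0 a n) with (sum_f_R0 a N).
  { unfold Rdist. rewrite Rminus_diag, Rabs_R0. lra. }
  induction Hn; auto. simpl. rewrite <- IHHn, Ha by lia. ring.
Qed.

Definition ps_const (c : R) : nat -> R := fun k => match k with O => c | _ => 0 end.

Lemma is_series_ps_const (f : nat -> R) (c : R) :
  f O = c -> (forall k, f (S k) = 0) -> is_series f c.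
Proof.
  intros H0 HS. rewrite <- H0. apply (is_series_finite_support f 0).
  intros [|k] Hk; [lia|apply HS].
Qed.

Lemma PSeries_ps_const (c x : R) : PSeries (ps_const c) x = c.
Proof. apply is_series_unique, is_series_ps_const; simpl; intros; ring. Qed.

Fixpoint ps_pow (a : nat -> R) (n : nat) : nat -> R :=
  match n with O => ps_const 1 | S n => PS_mult a (ps_pow a n) end.

Definition abs_summable (r : R) (a : nat -> R) : Prop := ex_series (fun k => Rabs (a k) * r ^ k).
Definition wnorm (r : R) (a : nat -> R) : R := Series (fun k => Rabs (a k) * r ^ k).

Section WeightedNorm.
Variable r : R.
Hypothesis r_gt0 : 0 < r.

Lemma wterm_ge0 (a : nat -> R) (k : nat) : 0 <= Rabs (a k) * r ^ k.
Proof. apply Rmult_le_pos; [apply Rabs_pos|apply pow_le; lra]. Qed.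

Lemma Rabs_wterm (a : nat -> R) (k : nat) : Rabs (Rabs (a k) * r ^ k) = Rabs (a k) * r ^ k.
Proof. apply Rabs_pos_eq, wterm_ge0. Qed.

Lemma wnorm_ge0 (a : nat -> R) : abs_summable r a -> 0 <= wnorm r a.
Proof. intros Ha. apply Series_ge0; auto using wterm_ge0. Qed.

Lemma Rabs_coef_pow_le_wnorm (a : nat -> R) (k : nat) :
  abs_summable r a -> Rabs (a k) * r ^ k <= wnorm r a.
Proof. intros Ha. apply (term_le_Series (fun k => Rabs (a k) * r ^ k)); auto using wterm_ge0. Qed.

Lemma abs_summable_le (a b : nat -> R) :
  (forall k, Rabs (a k) * r ^ k <= b k) -> ex_series b ->
  abs_summable r a /\ wnorm r a <= Series b.
Proof.
  intros Hab Hb.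
  assert (Hab' : forall k, Rabs (Rabs (a k) * r ^ k) <= b k) by (intros; now rewrite Rabs_wterm).
  split; [now apply (ex_series_le_R _ b)|].
  eapply Rle_trans; [apply Rle_abs|]. now apply Series_Rabs_le.
Qed.

Lemma abs_summable_plus (a b : nat -> R) :
  abs_summable r a -> abs_summable r b ->
  abs_summable r (PS_plus a b) /\ wnorm r (PS_plus a b) <= wnorm r a + wnorm r b.
Proof.
  intros Ha Hb. unfold wnorm at 2 3. rewrite <- Series_plus by auto.
  apply abs_summable_le; [|now apply (ex_series_plus (fun k => Rabs (a k) * r ^ k))].
  intros k. rewrite <- Rmult_plus_distr_r. apply Rmult_le_compat_r; [apply pow_le; lra|].
  apply Rabs_triang.
Qed.

Lemma abs_summable_scal (c : R) (a : nat -> R) :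
  abs_summable r a -> abs_summable r (PS_scal c a) /\ wnorm r (PS_scal c a) = Rabs c * wnorm r a.
Proof.
  intros Ha.
  assert (E : forall k, Rabs (PS_scal c a k) * r ^ k = Rabs c * (Rabs (a k) * r ^ k)).
  { intros k. unfold PS_scal, scal; simpl; unfold mult; simpl. rewrite Rabs_mult; ring. }
  split.
  - apply (ex_series_ext _ _ (fun k => eq_sym (E k))).
    now apply (ex_series_scal_l (Rabs c) (fun k => Rabs (a k) * r ^ k)).
  - unfold wnorm. rewrite (Series_ext _ _ E). apply Series_scal_l.
Qed.

Lemma abs_summable_mult (a b : nat -> R) :
  abs_summable r a -> abs_summable r b ->
  abs_summable r (PS_mult a b) /\ wnorm r (PS_mult a b) <= wnorm r a * wnorm r b.
Proof.
  intros Ha Hb.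
  set (wa := fun k => Rabs (a k) * r ^ k). set (wb := fun k => Rabs (b k) * r ^ k).
  assert (Hprod : is_series (fun n => sum_f_R0 (fun k => wa k * wb (n - k)%nat) n)
                            (wnorm r a * wnorm r b)).
  { apply is_series_mult; try now apply Series_correct.
    - apply (ex_series_ext wa); auto. intros k; symmetry; apply Rabs_wterm.
    - apply (ex_series_ext wb); auto. intros k; symmetry; apply Rabs_wterm. }
  rewrite <- (is_series_unique _ _ Hprod).
  apply abs_summable_le; [|eexists; eauto].
  intros n. unfold PS_mult.
  eapply Rle_trans.
  { apply Rmult_le_compat_r; [apply pow_le; lra|apply sum_f_R0_triangle]. }
  rewrite Rmult_comm, scal_sum. apply sum_Rle. intros k Hk. unfold wa, wb.
  replace (r ^ n) with (r ^ k * r ^ (n - k)) by (rewrite <- pow_add; f_equal; lia).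
  rewrite Rabs_mult. right; ring.
Qed.

Lemma abs_summable_const (c : R) :
  abs_summable r (ps_const c) /\ wnorm r (ps_const c) = Rabs c.
Proof.
  assert (H : is_series (fun k => Rabs (ps_const c k) * r ^ k) (Rabs c)).
  { apply is_series_ps_const; simpl; intros; rewrite ?Rabs_R0; ring. }
  split; [eexists; eauto|]. now apply is_series_unique.
Qed.

Lemma abs_summable_pow (a : nat -> R) (n : nat) :
  abs_summable r a -> abs_summable r (ps_pow a n) /\ wnorm r (ps_pow a n) <= wnorm r a ^ n.
Proof.
  intros Ha. induction n as [|n [IHs IHn]]; simpl.
  - rewrite (proj2 (abs_summable_const 1)), Rabs_R1.
    split; [apply abs_summable_const|lra].
  - destruct (abs_summable_mult a (ps_pow a n)) as [Hs Hn]; auto. split; auto.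
    eapply Rle_trans; [exact Hn|]. apply Rmult_le_compat_l; auto using wnorm_ge0.
Qed.

Lemma abs_summable_CV_radius (a : nat -> R) (x : R) :
  abs_summable r a -> Rabs x < r -> Rbar_lt (Rabs x) (CV_radius a).
Proof.
  intros Ha Hx.
  assert (Hr : Rbar_le r (CV_radius a)).
  { apply CV_radius_bounded. exists (wnorm r a). intros n.
    rewrite Rabs_mult, (Rabs_pos_eq (r ^ n)) by (apply pow_le; lra).
    now apply Rabs_coef_pow_le_wnorm. }
  destruct (CV_radius a); simpl in *; auto. lra.
Qed.

Lemma abs_summable_ex_pseries (a : nat -> R) (x : R) :
  abs_summable r a -> Rabs x <= r -> ex_pseries a x.
Proof.
  intros Ha Hx. apply ex_pseries_R, (ex_series_le_R _ (fun k => Rabs (a k) * r ^ k)); auto.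
  intros k. rewrite Rabs_mult, <- RPow_abs. apply Rmult_le_compat_l; [apply Rabs_pos|].
  apply pow_incr. split; auto using Rabs_pos.
Qed.

Lemma Rabs_PSeries_le_wnorm (a : nat -> R) (x : R) :
  abs_summable r a -> Rabs x <= r -> Rabs (PSeries a x) <= wnorm r a.
Proof.
  intros Ha Hx. apply Series_Rabs_le; auto.
  intros k. rewrite Rabs_mult, <- RPow_abs. apply Rmult_le_compat_l; [apply Rabs_pos|].
  apply pow_incr. split; auto using Rabs_pos.
Qed.

Lemma PSeries_ps_pow (a : nat -> R) (n : nat) (x : R) :
  abs_summable r a -> Rabs x < r -> PSeries (ps_pow a n) x = PSeries a x ^ n.
Proof.
  intros Ha Hx. induction n as [|n IHn]; simpl; [apply PSeries_ps_const|].
  rewrite PSeries_mult, IHn; auto using abs_summable_CV_radius.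
  apply abs_summable_CV_radius; auto. now apply abs_summable_pow.
Qed.

Lemma abs_summable_Series (F : nat -> nat -> R) :
  (forall n, abs_summable r (F n)) -> ex_series (fun n => wnorm r (F n)) ->
  abs_summable r (fun k => Series (fun n => F n k)) /\
  wnorm r (fun k => Series (fun n => F n k)) <= Series (fun n => wnorm r (F n)) /\
  forall x, Rabs x < r ->
    is_pseries (fun k => Series (fun n => F n k)) x (Series (fun n => PSeries (F n) x)).
Proof.
  intros HF Hsum.
  set (w := fun n k => Rabs (F n k) * r ^ k).
  destruct (Series_swap_nonneg w) as [Hcol [Hex Heq]]; auto.
  { intros; apply wterm_ge0. }
  assert (Hcoef : forall k, Rabs (Series (fun n => F n k)) * r ^ k <= Series (fun n => w n k)).
  { intros k. unfold w. rewrite Series_scal_r.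
    apply Rmult_le_compat_r; [apply pow_le; lra|].
    apply Series_Rabs_le; [intros; apply Rle_refl|].
    assert (E : forall n, / r ^ k * w n k = Rabs (F n k)).
    { intros n; unfold w. field. apply pow_nonzero; lra. }
    apply (ex_series_ext _ _ E). now apply (ex_series_scal_l (/ r ^ k) (fun n => w n k)). }
  destruct (abs_summable_le _ _ Hcoef Hex) as [Hs Hn].
  split; auto. split; [rewrite Heq in Hn; exact Hn|].
  intros x Hx. apply is_pseries_R.
  set (a := fun n k => F n k * x ^ k).
  assert (Haw : forall n k, Rabs (a n k) <= w n k).
  { intros n k. unfold a, w. rewrite Rabs_mult, <- RPow_abs.
    apply Rmult_le_compat_l; [apply Rabs_pos|]. apply pow_incr. split; [apply Rabs_pos|lra]. }
  assert (Habs : forall n, ex_series (fun k => Rabs (a n k))).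
  { intros n. apply (ex_series_le_R _ (w n)); [|apply HF]. intros k. now rewrite Rabs_Rabsolu. }
  destruct (Series_swap a) as [Hexa Heqa]; auto.
  { apply (ex_series_le_R _ (fun n => wnorm r (F n))); auto. intros n.
    rewrite Rabs_pos_eq by (apply Series_ge0; auto using Rabs_pos).
    apply Series_le; [|apply HF]. intros k; split; auto using Rabs_pos. }
  apply (is_series_ext (fun k => Series (fun n => a n k))).
  { intros k. unfold a. now rewrite Series_scal_r. }
  change (Series (fun n => PSeries (F n) x)) with (Series (fun n => Series (a n))).
  rewrite <- Heqa. now apply Series_correct.
Qed.

End WeightedNorm.

(** * The coefficient recursion *)

Lemma strong_ind_from4 (Q : nat -> Prop) :
  (forall n, (n < 4)%nat -> Q n) ->
  (forall p, (forall i, (i < p + 4)%nat -> Q i) -> Q (p + 4)%nat) ->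
  forall n, Q n.
Proof.
  intros Hinit Hstep n. induction n as [n IH] using (well_founded_ind Nat.lt_wf_0).
  destruct (Nat.lt_ge_cases n 4) as [Hn|Hn]; [now apply Hinit|].
  replace n with ((n - 4) + 4)%nat by lia. apply Hstep. intros i Hi. apply IH. lia.
Qed.

Definition rising4 (p : nat) : R := INR ((p + 1) * (p + 2) * (p + 3) * (p + 4)).

Lemma rising4_gt0 (p : nat) : 0 < rising4 p.
Proof. unfold rising4. apply lt_0_INR. lia. Qed.

(* Taylor coefficients [c] of a solution at [z = a], i.e. [A (a + t) = sum c_k t^k], satisfy
   [rising4 p * c (p + 4) = - ((c * c * c) p + a c p + c (p - 1))], the last term coming from
   [t A].  They are computed here in an arbitrary algebra [X], so that the same recursion
   can be run on real numbers and on power series in [delta]. *)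
Section CoefficientRecursion.
Variable X : Type.
Variables (zero : X) (add mul : X -> X -> X) (scal : R -> X -> X).
Variables (a0 : X) (init : nat -> X).

Fixpoint sumX (f : nat -> X) (n : nat) : X :=
  match n with O => f O | S m => add (sumX f m) (f (S m)) end.

Definition convX (f g : nat -> X) (n : nat) : X := sumX (fun k => mul (f k) (g (n - k)%nat)) n.

Definition shiftX (h : nat -> X) (p : nat) : X := match p with O => zero | S q => h q end.

Definition ode_rhs (h : nat -> X) (p : nat) : X :=
  scal (- / rising4 p) (add (add (convX h (convX h h) p) (mul a0 (h p))) (shiftX h p)).

Definition next_coef (h : nat -> X) (n : nat) : X :=
  match n with S (S (S (S p))) => ode_rhs h p | _ => init n end.

Fixpoint coefs_below (n : nat) : nat -> X :=
  match n with
  | O => fun _ => zero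
  | S m => fun i => if Nat.ltb i m then coefs_below m i else next_coef (coefs_below m) m
  end.

Definition ode_coef (n : nat) : X := coefs_below (S n) n.

Lemma coefs_below_coef (m i : nat) : (i < m)%nat -> coefs_below m i = ode_coef i.
Proof.
  induction m as [|m IHm]; intros Hi; [lia|]. simpl.
  destruct (Nat.ltb_spec i m); [now apply IHm|].
  replace i with m by lia. unfold ode_coef. cbn [coefs_below]. now rewrite Nat.ltb_irrefl.
Qed.

Lemma sumX_ext (f g : nat -> X) (n : nat) :
  (forall k, (k <= n)%nat -> f k = g k) -> sumX f n = sumX g n.
Proof.
  induction n as [|n IHn]; intros H; simpl; [apply H; lia|].
  rewrite IHn, H; auto with arith.
Qed.

Lemma ode_rhs_ext (h h' : nat -> X) (p : nat) :
  (forall i, (i <= p)%nat -> h i = h' i) -> ode_rhs h p = ode_rhs h' p.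
Proof.
  intros H. unfold ode_rhs, convX, shiftX.
  rewrite (H p) by lia.
  replace (match p with O => zero | S q => h q end)
    with (match p with O => zero | S q => h' q end)
    by (destruct p; [reflexivity|symmetry; apply H; lia]).
  do 3 f_equal. apply sumX_ext. intros k Hk. rewrite H by lia. f_equal.
  apply sumX_ext. intros j Hj. rewrite !H by lia. reflexivity.
Qed.

Lemma ode_coef_next (n : nat) : ode_coef n = next_coef (coefs_below n) n.
Proof. unfold ode_coef. cbn [coefs_below]. now rewrite Nat.ltb_irrefl. Qed.

Lemma ode_coef_init (n : nat) : (n < 4)%nat -> ode_coef n = init n.
Proof. intros Hn. rewrite ode_coef_next. destruct n as [|[|[|[|n]]]]; reflexivity || lia. Qed.

Lemma ode_coef_rec (p : nat) : ode_coef (p + 4) = ode_rhs ode_coef p.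
Proof.
  rewrite ode_coef_next. replace (p + 4)%nat with (S (S (S (S p)))) by lia.
  apply ode_rhs_ext. intros i Hi. apply coefs_below_coef. lia.
Qed.

Section Invariant.
Variable P : X -> Prop.
Hypotheses (P_zero : P zero) (P_add : forall x y, P x -> P y -> P (add x y))
  (P_mul : forall x y, P x -> P y -> P (mul x y)) (P_scal : forall c x, P x -> P (scal c x))
  (P_a0 : P a0) (P_init : forall n, (n < 4)%nat -> P (init n)).

Lemma P_sumX (f : nat -> X) (n : nat) : (forall k, (k <= n)%nat -> P (f k)) -> P (sumX f n).
Proof.
  induction n as [|n IHn]; intros H; simpl; [apply H; lia|].
  apply P_add; [apply IHn; intros; apply H|apply H]; lia.
Qed.

Lemma P_convX (f g : nat -> X) (n : nat) :
  (forall k, (k <= n)%nat -> P (f k)) -> (forall k, (k <= n)%nat -> P (g k)) ->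
  P (convX f g n).
Proof. intros Hf Hg. apply P_sumX. intros k Hk. apply P_mul; [apply Hf|apply Hg]; lia. Qed.

Lemma P_ode_rhs (h : nat -> X) (p : nat) :
  (forall i, (i <= p)%nat -> P (h i)) -> P (ode_rhs h p).
Proof.
  intros H. unfold ode_rhs. apply P_scal, P_add; [apply P_add|].
  - apply P_convX; auto. intros k Hk. apply P_convX; intros; apply H; lia.
  - apply P_mul; auto.
  - destruct p; simpl; auto.
Qed.

Lemma P_ode_coef (n : nat) : P (ode_coef n).
Proof.
  induction n as [n Hn|p IH] using strong_ind_from4.
  - rewrite ode_coef_init; auto.
  - rewrite ode_coef_rec. apply P_ode_rhs. intros i Hi. apply IH. lia.
Qed.

End Invariant.
End CoefficientRecursion.

Arguments ode_coef {X} zero add mul scal a0 init n.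
Arguments ode_rhs {X} zero add mul scal a0 h p.
Arguments convX {X} add mul f g n.
Arguments sumX {X} add f n.
Arguments shiftX {X} zero h p.

Section Transfer.
Variables X Y : Type.
Variables (zero : X) (add mul : X -> X -> X) (scal : R -> X -> X) (a0 : X) (init : nat -> X).
Variables (zero' : Y) (add' mul' : Y -> Y -> Y) (scal' : R -> Y -> Y) (a0' : Y)
  (init' : nat -> Y).
Variable P : X -> Prop.
Hypotheses (P_zero : P zero) (P_add : forall x y, P x -> P y -> P (add x y))
  (P_mul : forall x y, P x -> P y -> P (mul x y)) (P_scal : forall c x, P x -> P (scal c x))
  (P_a0 : P a0) (P_init : forall n, (n < 4)%nat -> P (init n)).
Variable phi : X -> Y.
Hypotheses (phi_zero : phi zero = zero')
  (phi_add : forall x y, P x -> P y -> phi (add x y) = add' (phi x) (phi y))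
  (phi_mul : forall x y, P x -> P y -> phi (mul x y) = mul' (phi x) (phi y))
  (phi_scal : forall c x, P x -> phi (scal c x) = scal' c (phi x))
  (phi_a0 : phi a0 = a0') (phi_init : forall n, (n < 4)%nat -> phi (init n) = init' n).

Lemma phi_sumX (f : nat -> X) (n : nat) : (forall k, (k <= n)%nat -> P (f k)) ->
  phi (sumX add f n) = sumX add' (fun k => phi (f k)) n.
Proof.
  induction n as [|n IHn]; intros H; simpl; auto.
  rewrite phi_add, IHn; auto. apply P_sumX; auto.
Qed.

Lemma phi_convX (f g : nat -> X) (n : nat) :
  (forall k, (k <= n)%nat -> P (f k)) -> (forall k, (k <= n)%nat -> P (g k)) ->
  phi (convX add mul f g n) = convX add' mul' (fun k => phi (f k)) (fun k => phi (g k)) n.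
Proof.
  intros Hf Hg. unfold convX. rewrite phi_sumX.
  - apply sumX_ext. intros k Hk. apply phi_mul; [apply Hf|apply Hg]; lia.
  - intros k Hk. apply P_mul; [apply Hf|apply Hg]; lia.
Qed.

Lemma phi_ode_coef (n : nat) :
  phi (ode_coef zero add mul scal a0 init n) = ode_coef zero' add' mul' scal' a0' init' n.
Proof.
  assert (Pc := P_ode_coef X zero add mul scal a0 init P P_zero P_add P_mul P_scal P_a0 P_init).
  assert (Pconv : forall n, P (convX add mul (ode_coef zero add mul scal a0 init)
                                         (ode_coef zero add mul scal a0 init) n)).
  { intros m. apply P_convX; auto. }
  induction n as [n Hn|p IH] using strong_ind_from4.
  - rewrite !ode_coef_init; auto.
  - rewrite !ode_coef_rec. set (c := ode_coef zero add mul scal a0 init) in *.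
    assert (Pcc : forall n, P (convX add mul c (convX add mul c c) n)).
    { intros m. apply P_convX; auto. }
    assert (Pshift : P (shiftX zero c p)) by (destruct p; simpl; auto).
    unfold ode_rhs at 1. rewrite phi_scal, !phi_add, phi_mul, phi_convX by auto.
    unfold ode_rhs. do 2 f_equal; [f_equal|].
    + unfold convX at 1 3. apply sumX_ext. intros k Hk. rewrite phi_convX, IH by (auto || lia).
      f_equal. apply sumX_ext. intros j Hj. rewrite !IH by lia. reflexivity.
    + rewrite phi_a0, IH by lia. reflexivity.
    + destruct p; simpl; auto. apply IH. lia.
Qed.

End Transfer.

Section NormRecursion.
Variable X : Type.
Variables (zero : X) (add mul : X -> X -> X) (scal : R -> X -> X) (a0 : X) (init : nat -> X).
Variable P : X -> Prop.
Hypotheses (P_zero : P zero) (P_add : forall x y, P x -> P y -> P (add x y))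
  (P_mul : forall x y, P x -> P y -> P (mul x y)) (P_scal : forall c x, P x -> P (scal c x))
  (P_a0 : P a0) (P_init : forall n, (n < 4)%nat -> P (init n)).
Variable nu : X -> R.
Hypotheses (nu_zero : nu zero = 0)
  (nu_add : forall x y, P x -> P y -> nu (add x y) <= nu x + nu y)
  (nu_mul : forall x y, P x -> P y -> nu (mul x y) <= nu x * nu y)
  (nu_scal : forall c x, P x -> nu (scal c x) = Rabs c * nu x)
  (nu_ge0 : forall x, P x -> 0 <= nu x).

Lemma nu_sumX (f : nat -> X) (n : nat) :
  (forall k, (k <= n)%nat -> P (f k)) -> nu (sumX add f n) <= sum_f_R0 (fun k => nu (f k)) n.
Proof.
  induction n as [|n IHn]; intros H; simpl; [lra|].
  eapply Rle_trans; [apply nu_add; [apply P_sumX|]; auto|].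
  apply Rplus_le_compat_r, IHn. auto.
Qed.

Lemma nu_convX (f g : nat -> X) (gb : nat -> R) (n : nat) :
  (forall k, (k <= n)%nat -> P (f k)) -> (forall k, (k <= n)%nat -> P (g k)) ->
  (forall k, (k <= n)%nat -> nu (g k) <= gb k) ->
  nu (convX add mul f g n) <= PS_mult (fun k => nu (f k)) gb n.
Proof.
  intros Hf Hg Hgb. eapply Rle_trans.
  { apply nu_sumX. intros k Hk. apply P_mul; [apply Hf|apply Hg]; lia. }
  apply sum_Rle. intros k Hk. eapply Rle_trans; [apply nu_mul; [apply Hf|apply Hg]; lia|].
  apply Rmult_le_compat_l; [apply nu_ge0, Hf; lia|apply Hgb; lia].
Qed.

Lemma nu_ode_coef_rec (p : nat) :
  let m := fun n => nu (ode_coef zero add mul scal a0 init n) in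
  rising4 p * m (p + 4)%nat <= PS_mult m (PS_mult m m) p + nu a0 * m p + shiftX 0 m p.
Proof.
  intros m. unfold m. rewrite ode_coef_rec. set (c := ode_coef zero add mul scal a0 init).
  assert (Pc := P_ode_coef X zero add mul scal a0 init P P_zero P_add P_mul P_scal P_a0 P_init).
  assert (Pcc : forall n, P (convX add mul c (convX add mul c c) n)).
  { intros n. apply P_convX; auto. intros k Hk. apply P_convX; auto. }
  assert (Pshift : P (shiftX zero c p)) by (destruct p; simpl; auto).
  unfold ode_rhs. rewrite nu_scal by auto.
  assert (Hinv : 0 < / rising4 p) by (apply Rinv_0_lt_compat, rising4_gt0).
  rewrite Rabs_Ropp, (Rabs_pos_eq _ (Rlt_le _ _ Hinv)), <- Rmult_assoc, Rinv_r, Rmult_1_l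
    by (apply Rgt_not_eq, rising4_gt0).
  eapply Rle_trans; [apply nu_add; auto|].
  apply Rplus_le_compat; [eapply Rle_trans; [apply nu_add; auto|]|].
  - apply Rplus_le_compat; [|now apply nu_mul].
    apply nu_convX; auto. intros k Hk. apply P_convX; auto.
    intros k Hk. apply nu_convX; auto. intros; apply Rle_refl.
  - destruct p; simpl; [rewrite nu_zero|]; lra.
Qed.

End NormRecursion.

(** * A majorant for the recursion *)

Lemma rising4_ge (p : nat) : INR (S p) * INR (S p) <= rising4 p.
Proof. unfold rising4. rewrite <- mult_INR. apply le_INR. nia. Qed.

Lemma PS_mult_scale (a b : nat -> R) (rho : R) (n : nat) :
  PS_mult a b n * rho ^ n = PS_mult (fun k => a k * rho ^ k) (fun k => b k * rho ^ k) n.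
Proof.
  unfold PS_mult. rewrite Rmult_comm, scal_sum. apply sum_eq. intros k Hk.
  replace (rho ^ n) with (rho ^ k * rho ^ (n - k)) by (rewrite <- pow_add; f_equal; lia).
  ring.
Qed.

Lemma PS_mult_ge0 (a b : nat -> R) (n : nat) :
  (forall k, 0 <= a k) -> (forall k, 0 <= b k) -> 0 <= PS_mult a b n.
Proof. intros Ha Hb. apply cond_pos_sum. intros k. apply Rmult_le_pos; auto. Qed.

Lemma cube_conv_le (w : nat -> R) (M : R) (p : nat) :
  (forall n, 0 <= w n) -> (forall i, (i <= p)%nat -> w i <= M) ->
  PS_mult w (PS_mult w w) p <= INR (S p) * INR (S p) * (M * M * M).
Proof.
  intros Hw HM.
  assert (HM0 : 0 <= M) by (apply Rle_trans with (w O); auto with arith).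
  apply Rle_trans with (sum_f_R0 (fun _ => M * (INR (S p) * (M * M))) p); [|rewrite sum_cte; nra].
  apply sum_Rle. intros k Hk. apply Rmult_le_compat; auto using PS_mult_ge0.
  apply Rle_trans with (sum_f_R0 (fun _ => M * M) (p - k)).
  - apply sum_Rle. intros j Hj. apply Rmult_le_compat; auto; apply HM; lia.
  - rewrite sum_cte, Rmult_comm. apply Rmult_le_compat_r; [nra|]. apply le_INR. lia.
Qed.

Lemma weighted_coef_rec (m : nat -> R) (al rho : R) (p : nat) :
  0 <= al -> 0 <= rho -> (forall n, 0 <= m n) ->
  rising4 p * m (p + 4)%nat <= PS_mult m (PS_mult m m) p + al * m p + shiftX 0 m p ->
  let w := fun n => m n * rho ^ n in
  rising4 p * w (p + 4)%nat <=
    rho ^ 4 * PS_mult w (PS_mult w w) p + rho ^ 4 * (al + rho) * (w p + shiftX 0 w p).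
Proof.
  intros Hal Hrho Hm Hrec w.
  assert (Hw : forall n, 0 <= w n) by (intros; apply Rmult_le_pos; auto using pow_le).
  assert (Hconv : PS_mult m (PS_mult m m) p * rho ^ p = PS_mult w (PS_mult w w) p).
  { rewrite PS_mult_scale. unfold PS_mult at 1 3. apply sum_eq. intros k Hk.
    unfold w. now rewrite PS_mult_scale. }
  assert (Hshift : shiftX 0 m p * rho ^ (p + 4) = rho ^ 5 * shiftX 0 w p).
  { destruct p; simpl; [ring|]. unfold w. replace (S p + 4)%nat with (5 + p)%nat by lia.
    rewrite pow_add. ring. }
  assert (Hstep : rising4 p * w (p + 4)%nat <=
                  (PS_mult m (PS_mult m m) p + al * m p + shiftX 0 m p) * rho ^ (p + 4)).
  { unfold w. rewrite <- Rmult_assoc. apply Rmult_le_compat_r; auto using pow_le. }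
  eapply Rle_trans; [exact Hstep|].
  rewrite !Rmult_plus_distr_r, Hshift.
  replace (rho ^ (p + 4)) with (rho ^ 4 * rho ^ p) by (rewrite <- pow_add; f_equal; lia).
  replace (PS_mult m (PS_mult m m) p * (rho ^ 4 * rho ^ p))
    with (rho ^ 4 * PS_mult w (PS_mult w w) p) by (rewrite <- Hconv; ring).
  replace (al * m p * (rho ^ 4 * rho ^ p)) with (rho ^ 4 * al * w p) by (unfold w; ring).
  assert (Hsh : 0 <= shiftX 0 w p) by (destruct p; simpl; auto; lra).
  assert (Hr4 : 0 <= rho ^ 4) by auto using pow_le.
  assert (0 <= rho ^ 4 * al * shiftX 0 w p) by (apply Rmult_le_pos; auto; nra).
  assert (0 <= rho ^ 4 * rho * w p) by (apply Rmult_le_pos; auto; nra).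
  replace (rho ^ 5) with (rho ^ 4 * rho) by ring. nra.
Qed.

(* Below [N] the linear terms may multiply [w] by [G]
   per step; beyond [N] they are absorbed by [rising4 p > N >= G = 4 B + 1].  The cubic
   term is harmless as soon as [e0 ^ 2 * G ^ (3 N)] is small. *)
Section Majorant.
Variables A B : R.
Hypotheses (A_ge0 : 0 <= A) (B_ge0 : 0 <= B).

Let G := 4 * B + 1.

Variable N : nat.
Hypothesis H_le_N : G <= INR N.
Variable e0 : R.
Hypotheses (e0_gt0 : 0 < e0) (e0_small : 2 * A * e0 * G ^ (3 * N) <= 1) (e0_le1 : e0 <= 1).

Section Step.
Variable w : nat -> R.
Hypothesis w_ge0 : forall n, 0 <= w n.
Variable p : nat.
Hypothesis w_le : forall i, (i < p + 4)%nat -> w i <= e0 * G ^ Nat.min i N.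

Lemma cubic_term_le : A * PS_mult w (PS_mult w w) p <= rising4 p * (e0 * G ^ Nat.min (p + 4) N) / 2.
Proof.
  assert (HG : 1 <= G) by (unfold G; lra).
  set (M := e0 * G ^ N).
  assert (HM : forall i, (i <= p)%nat -> w i <= M).
  { intros i Hi. eapply Rle_trans; [apply w_le; lia|]. apply Rmult_le_compat_l; [lra|].
    apply Rle_pow; auto; lia. }
  eapply Rle_trans; [apply Rmult_le_compat_l; [auto|apply (cube_conv_le w M p); auto]|].
  pose proof (rising4_ge p). pose proof (pow_R1_Rle G (Nat.min (p + 4) N) HG).
  assert (HN3 : G ^ (3 * N) = G ^ N * G ^ N * G ^ N) by (rewrite <- !pow_add; f_equal; lia).
  assert (0 <= INR (S p) * INR (S p)) by (apply Rmult_le_pos; apply pos_INR).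
  apply Rle_trans with (INR (S p) * INR (S p) * e0 / 2).
  - unfold M. replace (A * (INR (S p) * INR (S p) * (e0 * G ^ N * (e0 * G ^ N) * (e0 * G ^ N))))
      with (INR (S p) * INR (S p) * e0 * (A * e0 * e0 * (G ^ N * G ^ N * G ^ N))) by ring.
    rewrite <- HN3. assert (A * e0 * e0 * G ^ (3 * N) <= / 2).
    { set (X := A * e0 * G ^ (3 * N)).
      assert (0 <= X) by (apply Rmult_le_pos; [nra|apply pow_le; unfold G; lra]).
      replace (A * e0 * e0 * G ^ (3 * N)) with (X * e0) by (unfold X; ring).
      apply Rle_trans with (X * 1); [apply Rmult_le_compat_l|unfold X]; lra. }
    assert (0 <= INR (S p) * INR (S p) * e0) by (apply Rmult_le_pos; lra).
    unfold Rdiv. apply Rmult_le_compat_l; auto.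
  - unfold Rdiv. apply Rmult_le_compat_r; [lra|]. rewrite <- Rmult_assoc.
    rewrite <- (Rmult_1_r (INR (S p) * INR (S p) * e0)).
    apply Rmult_le_compat; auto; [apply Rmult_le_pos; lra|lra|].
    apply Rmult_le_compat_r; lra.
Qed.

Lemma linear_term_le :
  B * (w p + shiftX 0 w p) <= rising4 p * (e0 * G ^ Nat.min (p + 4) N) / 2.
Proof.
  assert (HG : 1 <= G) by (unfold G; lra).
  set (E := e0 * G ^ Nat.min p N).
  assert (HE : 0 <= E) by (apply Rmult_le_pos; [lra|apply pow_le; lra]).
  assert (Hsum : w p + shiftX 0 w p <= 2 * E).
  { assert (w p <= E) by (apply w_le; lia).
    destruct p as [|q]; simpl; [lra|].
    assert (w q <= E); [|lra].
    eapply Rle_trans; [apply w_le; lia|]. apply Rmult_le_compat_l; [lra|].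
    apply Rle_pow; auto; lia. }
  set (E4 := e0 * G ^ Nat.min (p + 4) N).
  assert (HE4 : 0 <= E4) by (apply Rmult_le_pos; [lra|apply pow_le; lra]).
  assert (HEH : E * G = 4 * (B * E) + E) by (unfold G; ring).
  pose proof (rising4_ge p). assert (1 <= INR (S p)) by (apply (le_INR 1); lia).
  assert (Hr1 : 1 <= rising4 p) by nra.
  apply Rle_trans with (B * (2 * E)); [apply Rmult_le_compat_l; lra|].
  destruct (Nat.lt_ge_cases p N) as [HpN|HpN].
  - assert (E * G <= E4).
    { unfold E, E4. rewrite Rmult_assoc. apply Rmult_le_compat_l; [lra|].
      rewrite <- (pow_1 G) at 2. rewrite <- pow_add. apply Rle_pow; auto; lia. }
    assert (E4 <= rising4 p * E4) by (rewrite <- (Rmult_1_l E4) at 1; apply Rmult_le_compat_r; lra).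
    lra.
  - assert (HE4E : E4 = E) by (unfold E, E4; do 2 f_equal; lia). rewrite HE4E.
    assert (INR N <= INR (S p)) by (apply le_INR; lia).
    assert (G <= rising4 p) by nra.
    assert (E * G <= rising4 p * E) by (rewrite Rmult_comm; apply Rmult_le_compat_r; lra).
    lra.
Qed.

End Step.

Lemma majorant_le (w : nat -> R) :
  (forall n, 0 <= w n) -> (forall i, (i < 4)%nat -> w i <= e0) ->
  (forall p, rising4 p * w (p + 4)%nat <=
               A * PS_mult w (PS_mult w w) p + B * (w p + shiftX 0 w p)) ->
  forall n, w n <= e0 * G ^ Nat.min n N.
Proof.
  intros Hw Hinit Hrec n. induction n as [n Hn|p IH] using strong_ind_from4.
  - assert (HG : 1 <= G) by (unfold G; lra).
    pose proof (pow_R1_Rle G (Nat.min n N) HG).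
    apply Rle_trans with e0; [auto|nra].
  - pose proof (rising4_gt0 p).
    apply Rmult_le_reg_l with (rising4 p); auto.
    eapply Rle_trans; [apply Hrec|].
    pose proof (cubic_term_le w Hw p IH). pose proof (linear_term_le w p IH). lra.
Qed.

End Majorant.

Lemma majorant_bounded (A B : R) : 0 <= A -> 0 <= B ->
  exists e0 K, 0 < e0 /\ forall w : nat -> R,
    (forall n, 0 <= w n) -> (forall i, (i < 4)%nat -> w i <= e0) ->
    (forall p, rising4 p * w (p + 4)%nat <=
                 A * PS_mult w (PS_mult w w) p + B * (w p + shiftX 0 w p)) ->
    forall n, w n <= K.
Proof.
  intros HA HB. set (G := 4 * B + 1).
  destruct (INR_archimed 1 G) as [N HN]; [lra|]. rewrite Rmult_1_r in HN.
  assert (HH : 1 <= G ^ (3 * N)) by (apply pow_R1_Rle; unfold G; lra).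
  set (e0 := / (2 * (A + 1) * G ^ (3 * N))).
  assert (He0 : 0 < e0) by (apply Rinv_0_lt_compat; nra).
  assert (HX : 2 * (A + 1) * (e0 * G ^ (3 * N)) = 1) by (unfold e0; field; nra).
  assert (HX0 : 0 <= e0 * G ^ (3 * N)) by (apply Rmult_le_pos; lra).
  assert (Hsmall : 2 * A * e0 * G ^ (3 * N) <= 1) by nra.
  assert (He01 : e0 <= 1) by nra.
  exists e0, (e0 * G ^ N). split; auto. intros w Hw Hinit Hrec n.
  eapply Rle_trans; [apply (majorant_le A B HA HB N) with (w := w); auto; fold G; lra|].
  apply Rmult_le_compat_l; [lra|]. apply Rle_pow; [unfold G; lra|lia].
Qed.

(** * The binomial series *)

Section BinomialSeries.
Variable q : R.
Hypothesis q_bound : -1 <= q <= 1.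

Fixpoint binom_coef (k : nat) : R :=
  match k with O => 1 | S k => binom_coef k * (q - INR k) / INR (S k) end.

Lemma Rabs_binom_coef_le1 (k : nat) : Rabs (binom_coef k) <= 1.
Proof.
  induction k as [|k IHk]; simpl binom_coef; [rewrite Rabs_R1; lra|].
  assert (HS : 0 < INR (S k)) by (apply lt_0_INR; lia).
  assert (Hk : Rabs (q - INR k) <= INR (S k)).
  { rewrite S_INR. pose proof (pos_INR k). apply Rabs_le. lra. }
  unfold Rdiv. rewrite !Rabs_mult, (Rabs_pos_eq (/ _)) by (left; now apply Rinv_0_lt_compat).
  assert (Hfac : 0 <= Rabs (q - INR k) * / INR (S k) <= 1).
  { split; [apply Rmult_le_pos; [apply Rabs_pos|left; now apply Rinv_0_lt_compat]|].
    apply (Rmult_le_reg_r (INR (S k))); auto. rewrite Rmult_assoc, Rinv_l; lra. }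
  rewrite Rmult_assoc.
  apply Rle_trans with (1 * (Rabs (q - INR k) * / INR (S k))); [apply Rmult_le_compat_r|]; lra.
Qed.

Lemma binom_coef_CV_radius (y : R) : Rabs y < 1 -> Rbar_lt (Rabs y) (CV_radius binom_coef).
Proof.
  intros Hy.
  assert (H1 : Rbar_le 1 (CV_radius binom_coef)).
  { apply CV_radius_bounded. exists 1. intros n. rewrite pow1, Rmult_1_r.
    apply Rabs_binom_coef_le1. }
  destruct (CV_radius binom_coef); simpl in *; auto; lra.
Qed.

Lemma binom_series_ode (y : R) : Rabs y < 1 ->
  (1 + y) * PSeries (PS_derive binom_coef) y = q * PSeries binom_coef y.
Proof.
  intros Hy. pose proof (binom_coef_CV_radius y Hy) as Hrad.
  assert (Hder : forall n, PS_derive binom_coef n = q * binom_coef n - INR n * binom_coef n).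
  { intros n. unfold PS_derive. cbn [binom_coef]. field. apply not_0_INR. lia. }
  assert (Hincr : forall n, PS_incr_1 (PS_derive binom_coef) n = INR n * binom_coef n).
  { intros [|n]; cbn; [ring|reflexivity]. }
  assert (Hshift : PSeries (fun n => INR n * binom_coef n) y =
                   y * PSeries (PS_derive binom_coef) y).
  { rewrite <- PSeries_incr_1. apply PSeries_ext. intros n. now rewrite Hincr. }
  assert (Hex : ex_pseries (fun n => INR n * binom_coef n) y).
  { apply (ex_pseries_ext (PS_incr_1 (PS_derive binom_coef))); auto.
    apply ex_pseries_incr_1, ex_pseries_derive; auto. }
  assert (Hsplit : PSeries (PS_derive binom_coef) y =
                   q * PSeries binom_coef y - PSeries (fun n => INR n * binom_coef n) y).
  { rewrite <- PSeries_scal, <- PSeries_minus; auto.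
    - apply PSeries_ext. intros n. rewrite Hder. reflexivity.
    - apply ex_pseries_scal; [apply Rmult_comm|]. now apply CV_radius_inside. }
  rewrite Hshift in Hsplit. lra.
Qed.

Theorem binom_series (y : R) : Rabs y < 1 -> PSeries binom_coef y = Rpower (1 + y) q.
Proof.
  intros Hy.
  set (h := fun t => PSeries binom_coef t / Rpower (1 + t) q).
  assert (Hd : forall t, Rabs t < 1 -> is_derive h t 0).
  { intros t Ht.
    assert (Ht1 : 0 < 1 + t) by (apply Rabs_def2 in Ht; lra).
    assert (Hpow : is_derive (fun t => Rpower (1 + t) q) t (q * Rpower (1 + t) (q - 1))).
    { assert (Hout : is_derive (fun x => Rpower x q) (1 + t) (q * Rpower (1 + t) (q - 1)))
        by now apply is_derive_Reals, derivable_pt_lim_power.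
      assert (Hin : is_derive (fun t => 1 + t) t 1) by (auto_derive; auto; ring).
      pose proof (is_derive_comp _ _ t _ _ Hout Hin) as Hcomp.
      unfold scal in Hcomp; simpl in Hcomp; unfold mult in Hcomp; simpl in Hcomp.
      now rewrite Rmult_1_l in Hcomp. }
    assert (Hne : Rpower (1 + t) q <> 0) by (apply Rgt_not_eq, exp_pos).
    assert (Hq : Rpower (1 + t) q = Rpower (1 + t) (q - 1) * (1 + t)).
    { rewrite <- (Rpower_1 (1 + t)) at 3 by auto. rewrite <- Rpower_plus. f_equal; ring. }
    pose proof (is_derive_div _ _ t _ _ (is_derive_PSeries binom_coef t
                  (binom_coef_CV_radius t Ht)) Hpow Hne) as Hdiv. cbv beta in Hdiv.
    replace ((PSeries (PS_derive binom_coef) t * Rpower (1 + t) q -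
              PSeries binom_coef t * (q * Rpower (1 + t) (q - 1))) / Rpower (1 + t) q ^ 2)
      with 0 in Hdiv; [exact Hdiv|].
    rewrite Hq at 1.
    replace (PSeries (PS_derive binom_coef) t * (Rpower (1 + t) (q - 1) * (1 + t)) -
             PSeries binom_coef t * (q * Rpower (1 + t) (q - 1)))
      with (Rpower (1 + t) (q - 1) * ((1 + t) * PSeries (PS_derive binom_coef) t
                                      - q * PSeries binom_coef t)) by ring.
    rewrite binom_series_ode by auto. unfold Rdiv. ring. }
  assert (Hh : h y = h 0).
  { apply Rabs_def2 in Hy.
    destruct (Rlt_or_le y 0) as [Hneg|Hnneg].
    - apply (eq_is_derive h y 0); auto. intros t Ht. apply Hd, Rabs_def1; lra.
    - destruct Hnneg as [Hpos| <-]; [|reflexivity]. symmetry.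
      apply (eq_is_derive h 0 y); auto. intros t Ht. apply Hd, Rabs_def1; lra. }
  assert (Hone : Rpower 1 q = 1) by (unfold Rpower; now rewrite ln_1, Rmult_0_r, exp_0).
  unfold h in Hh. rewrite PSeries_0, Rplus_0_r, Hone in Hh. simpl binom_coef in Hh.
  assert (Hne : Rpower (1 + y) q <> 0) by (apply Rgt_not_eq, exp_pos).
  unfold Rdiv in Hh. rewrite Rinv_1, Rmult_1_r in Hh.
  apply (f_equal (fun v => v * Rpower (1 + y) q)) in Hh.
  rewrite Rmult_assoc, Rinv_l, Rmult_1_r, Rmult_1_l in Hh by auto. exact Hh.
Qed.

End BinomialSeries.

(** * Analytic dependence of [a_pm] on [delta] *)

Lemma Rpower_le_1plus (x p : R) : 0 < x -> 0 <= p <= 1 -> Rpower x p <= 1 + x.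
Proof.
  intros Hx Hp. destruct (Rle_or_lt 1 x) as [H1|H1].
  - apply Rle_trans with (Rpower x 1); [apply Rle_Rpower; lra|rewrite Rpower_1; lra].
  - assert (Hln : ln x < 0) by (rewrite <- ln_1; now apply ln_increasing).
    unfold Rpower. apply Rle_trans with (exp 0); [|rewrite exp_0; lra].
    destruct (Req_dec p 0) as [->|Hp0]; [rewrite Rmult_0_l; lra|].
    left. apply exp_increasing. nra.
Qed.

Definition gfun (d nu : R) : R := (1 + d ^ 2) * d / (8 * nu ^ 2).

Lemma gfun_gt0 (d nu : R) : 0 < d -> 0 < nu -> 0 < gfun d nu.
Proof. intros Hd Hnu. unfold gfun. apply Rdiv_lt_0_compat; nra. Qed.

Lemma gfun_le (d nu : R) : 0 < d <= 1 -> 0 < nu -> gfun d nu <= 1 / (4 * nu ^ 2).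
Proof.
  intros Hd Hnu. unfold gfun. assert (0 < nu ^ 2) by nra.
  apply Rmult_le_reg_r with (8 * nu ^ 2); [lra|]. field_simplify; nra.
Qed.

Lemma a_pm_le (d nu : R) : 0 < d <= 1 -> 0 < nu -> a_pm d nu <= 1 + 1 / (4 * nu ^ 2).
Proof.
  intros Hd Hnu. eapply Rle_trans; [apply Rpower_le_1plus; [apply gfun_gt0|]; lra|].
  pose proof (gfun_le d nu Hd Hnu). fold (gfun d nu). lra.
Qed.

(* Every power of [a_pm] occurring in the initial data is an integral power of
   [gfun ^ (1/10)]. *)
Lemma Rpower_a_pm (d nu y : R) (k : nat) : 0 < gfun d nu -> 2 / 5 * y = INR k / 10 ->
  Rpower (a_pm d nu) y = Rpower (gfun d nu) (1 / 10) ^ k.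
Proof.
  intros Hg Hy. unfold a_pm. fold (gfun d nu).
  rewrite Rpower_mult, Hy, <- Rpower_pow by apply exp_pos.
  rewrite Rpower_mult. f_equal. field.
Qed.

Lemma a_pm_root10 (d nu : R) : 0 < gfun d nu -> a_pm d nu = Rpower (gfun d nu) (1 / 10) ^ 4.
Proof.
  intros Hg. rewrite <- (Rpower_1 (a_pm d nu)) by apply exp_pos.
  apply Rpower_a_pm; auto. simpl; field.
Qed.

(* Small enough for [wnorm delta_radius gratio_coef <= 1 / 2]. *)
Definition delta_radius : R := 1 / 48.

Lemma delta_radius_gt0 : 0 < delta_radius.
Proof. unfold delta_radius. lra. Qed.

Section DeltaSeries.
Variables nu dl : R.
Hypotheses (nu_gt0 : 0 < nu) (dl_bound : 1 / 3 <= dl <= 1).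

(* Taylor coefficients in [x] of [gfun (dl + x) nu / gfun dl nu - 1], a cubic polynomial. *)
Definition gratio_coef (k : nat) : R :=
  match k with
  | 1%nat => (1 + 3 * dl ^ 2) / (dl + dl ^ 3)
  | 2%nat => 3 * dl / (dl + dl ^ 3)
  | 3%nat => 1 / (dl + dl ^ 3)
  | _ => 0
  end.

Lemma is_series_gratio_coef (f : R -> R) (x : R) : f 0 = 0 ->
  is_series (fun k => f (gratio_coef k) * x ^ k)
            (f (gratio_coef 1) * x + f (gratio_coef 2) * x ^ 2 + f (gratio_coef 3) * x ^ 3).
Proof.
  intros Hf0. replace (_ + _ + _) with (sum_f_R0 (fun k => f (gratio_coef k) * x ^ k) 3).
  - apply is_series_finite_support. intros [|[|[|[|k]]]] Hk; try lia. simpl. rewrite Hf0. ring.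
  - simpl. rewrite Hf0. ring.
Qed.

Lemma gratio_coef_summable :
  abs_summable delta_radius gratio_coef /\ wnorm delta_radius gratio_coef <= 1 / 2.
Proof.
  pose proof (is_series_gratio_coef Rabs delta_radius Rabs_R0) as Hs.
  split; [eexists; exact Hs|]. unfold wnorm. rewrite (is_series_unique _ _ Hs).
  assert (Hd : 1 / 3 <= dl + dl ^ 3) by nra.
  assert (Hcoef : forall c, 0 <= c <= 3 * (dl + dl ^ 3) ->
                  Rabs (c / (dl + dl ^ 3)) <= 3).
  { intros c Hc. rewrite Rabs_pos_eq by (apply Rdiv_le_0_compat; lra).
    apply Rmult_le_reg_r with (dl + dl ^ 3); [lra|]. unfold Rdiv.
    rewrite Rmult_assoc, Rinv_l; lra. }
  assert (H1 : Rabs (gratio_coef 1) <= 12).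
  { cbn [gratio_coef]. replace ((1 + 3 * dl ^ 2) / (dl + dl ^ 3))
      with (4 * ((1 + 3 * dl ^ 2) / 4 / (dl + dl ^ 3))) by (field; nra).
    rewrite Rabs_mult, Rabs_pos_eq by lra. pose proof (Hcoef ((1 + 3 * dl ^ 2) / 4)). nra. }
  assert (H2 : Rabs (gratio_coef 2) <= 9).
  { cbn [gratio_coef]. replace (3 * dl / (dl + dl ^ 3)) with (3 * (dl / (dl + dl ^ 3)))
      by (field; nra).
    rewrite Rabs_mult, Rabs_pos_eq by lra. pose proof (Hcoef dl). nra. }
  assert (H3 : Rabs (gratio_coef 3) <= 3) by (apply Hcoef; nra).
  pose proof (Rabs_pos (gratio_coef 1)). pose proof (Rabs_pos (gratio_coef 2)).
  pose proof (Rabs_pos (gratio_coef 3)). unfold delta_radius. nra.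
Qed.

Lemma PSeries_gratio (x : R) : PSeries gratio_coef x = gfun (dl + x) nu / gfun dl nu - 1.
Proof.
  unfold PSeries. rewrite (is_series_unique _ _ (is_series_gratio_coef (fun c => c) x eq_refl)).
  unfold gfun. cbn [gratio_coef]. field. repeat split; nra.
Qed.

(* [gfun (dl + x) nu ^ (1/10)] as a power series in [x], via the binomial series of
   [(1 + gratio) ^ (1/10)]. *)
Definition groot_term (k : nat) : nat -> R :=
  PS_scal (binom_coef (1 / 10) k) (ps_pow gratio_coef k).

Definition groot_coef : nat -> R :=
  PS_scal (Rpower (gfun dl nu) (1 / 10)) (fun j => Series (fun k => groot_term k j)).

Lemma groot_term_summable (k : nat) :
  abs_summable delta_radius (groot_term k) /\ wnorm delta_radius (groot_term k) <= (1 / 2) ^ k.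
Proof.
  pose proof delta_radius_gt0 as Hr. destruct gratio_coef_summable as [Hs Hn].
  destruct (abs_summable_pow delta_radius Hr gratio_coef k Hs) as [Hps Hpn].
  destruct (abs_summable_scal delta_radius (binom_coef (1 / 10) k) _ Hps) as [Hss Hsn].
  split; auto. unfold groot_term. rewrite Hsn.
  pose proof (Rabs_binom_coef_le1 (1 / 10) ltac:(lra) k).
  pose proof (wnorm_ge0 delta_radius Hr _ Hps).
  assert (wnorm delta_radius gratio_coef ^ k <= (1 / 2) ^ k)
    by (apply pow_incr; split; auto using wnorm_ge0).
  pose proof (Rabs_pos (binom_coef (1 / 10) k)). nra.
Qed.

Lemma groot_coef_spec :
  abs_summable delta_radius groot_coef /\
  wnorm delta_radius groot_coef <= 2 * Rpower (gfun dl nu) (1 / 10) /\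
  forall x, Rabs x < delta_radius ->
    PSeries groot_coef x = Rpower (gfun (dl + x) nu) (1 / 10).
Proof.
  pose proof delta_radius_gt0 as Hr. destruct gratio_coef_summable as [Hs Hn].
  assert (Hgeom : is_series (fun k => (1 / 2) ^ k) 2).
  { pose proof (is_series_geom (1 / 2)) as Hg. rewrite Rabs_pos_eq in Hg by lra.
    replace (/ (1 - 1 / 2)) with 2 in Hg by field. apply Hg; lra. }
  assert (Hsum : ex_series (fun k => wnorm delta_radius (groot_term k))).
  { apply (ex_series_le_R _ (fun k => (1 / 2) ^ k)); [|eexists; eauto].
    intros k. destruct (groot_term_summable k) as [Hk Hkn].
    rewrite Rabs_pos_eq; auto using wnorm_ge0. }
  destruct (abs_summable_Series delta_radius Hr groot_term
              (fun k => proj1 (groot_term_summable k)) Hsum) as [HB [HBn HBev]].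
  set (s0 := Rpower (gfun dl nu) (1 / 10)).
  assert (Hs0 : 0 < s0) by apply exp_pos.
  destruct (abs_summable_scal delta_radius s0 _ HB) as [HS HSn].
  split; [exact HS|split].
  - unfold groot_coef. fold s0. rewrite HSn, Rabs_pos_eq, (Rmult_comm 2) by lra.
    apply Rmult_le_compat_l; [lra|]. eapply Rle_trans; [exact HBn|].
    rewrite <- (is_series_unique _ _ Hgeom). apply Series_le; [|eexists; eauto].
    intros k. split; [apply wnorm_ge0; auto|]; apply groot_term_summable.
  - intros x Hx.
    assert (Hu : Rabs (PSeries gratio_coef x) < 1).
    { eapply Rle_lt_trans; [apply (Rabs_PSeries_le_wnorm delta_radius); auto; lra|lra]. }
    assert (Hg : 0 < gfun dl nu) by (apply gfun_gt0; lra).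
    assert (Hgx : 0 < gfun (dl + x) nu).
    { apply gfun_gt0; auto. apply Rabs_def2 in Hx. unfold delta_radius in Hx. lra. }
    unfold groot_coef. rewrite PSeries_scal, (is_pseries_unique _ _ _ (HBev x Hx)).
    transitivity (s0 * PSeries (binom_coef (1 / 10)) (PSeries gratio_coef x)).
    { f_equal. apply Series_ext. intros k. unfold groot_term.
      rewrite PSeries_scal, (PSeries_ps_pow delta_radius); auto. }
    rewrite binom_series, PSeries_gratio by (auto; lra).
    unfold s0. rewrite Rpower_mult_distr by (auto; ring_simplify; apply Rdiv_lt_0_compat; auto).
    f_equal. field. lra.
Qed.

End DeltaSeries.

(** * Power-series solutions *)

Section RealTaylorSeries.
Variables (a : R) (init : nat -> R).

Let c := ode_coef 0 Rplus Rmult Rmult a init.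

Lemma sumX_Rplus (f : nat -> R) (n : nat) : sumX Rplus f n = sum_f_R0 f n.
Proof. induction n as [|n IHn]; simpl; now rewrite ?IHn. Qed.

Lemma rising4_fact (k : nat) : INR (Factorial.fact (k + 4)) / INR (Factorial.fact k) = rising4 k.
Proof.
  unfold rising4. replace (k + 4)%nat with (S (S (S (S k)))) by lia.
  change (Factorial.fact (S (S (S (S k)))))
    with (S (S (S (S k))) * (S (S (S k)) * (S (S k) * (S k * Factorial.fact k))))%nat.
  rewrite !mult_INR, !S_INR, !plus_INR. simpl INR. field. apply INR_fact_neq_0.
Qed.

Lemma PS_derive_n_ode_coef (k : nat) :
  PS_derive_n 4 c k = - (PS_mult c (PS_mult c c) k + a * c k + shiftX 0 c k).
Proof.
  unfold PS_derive_n. rewrite rising4_fact. unfold c. rewrite ode_coef_rec. fold c.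
  unfold ode_rhs, convX. rewrite !sumX_Rplus.
  replace (sum_f_R0 (fun k0 => c k0 * sumX Rplus (fun k1 => c k1 * c (k - k0 - k1)%nat) (k - k0)) k)
    with (PS_mult c (PS_mult c c) k)
    by (apply sum_eq; intros; now rewrite sumX_Rplus).
  pose proof (rising4_gt0 k). field. lra.
Qed.

Variable r : R.
Hypotheses (r_gt0 : 0 < r) (c_summable : abs_summable r c).

Let A := fun z => PSeries c (z - a).

Lemma ex_derive_n_ode_series (z : R) (k : nat) : Rabs (z - a) < r -> ex_derive_n A k z.
Proof.
  intros Hz. apply (ex_derive_n_comp_trans (PSeries c) k z (- a)).
  apply ex_derive_n_PSeries. now apply (abs_summable_CV_radius r).
Qed.

Lemma Derive_n_ode_series_at (k : nat) : Derive_n A k a = c k * INR (Factorial.fact k).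
Proof.
  transitivity (Derive_n (PSeries c) k (a + - a));
    [exact (Derive_n_comp_trans (PSeries c) k a (- a))|rewrite Rplus_opp_r].
  apply Derive_n_coef. pose proof (abs_summable_CV_radius r r_gt0 c 0 c_summable) as Hrad.
  rewrite Rabs_R0 in Hrad. now apply Hrad.
Qed.

Lemma ode_series_solves (z : R) : Rabs (z - a) < r ->
  Derive_n A 4 z = - A z * (A z ^ 2 + z).
Proof.
  intros Hz. set (t := z - a).
  transitivity (Derive_n (PSeries c) 4 t); [exact (Derive_n_comp_trans (PSeries c) 4 z (- a))|].
  unfold A. fold t. rewrite Derive_n_PSeries by now apply (abs_summable_CV_radius r).
  assert (Ht : Rabs t <= r) by (unfold t; lra).
  destruct (abs_summable_mult r r_gt0 c c) as [Hcc _]; auto.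
  destruct (abs_summable_mult r r_gt0 c (PS_mult c c)) as [Hccc _]; auto.
  assert (Hshift : PSeries (shiftX 0 c) t = t * PSeries c t).
  { rewrite <- PSeries_incr_1. apply PSeries_ext. intros [|k]; reflexivity. }
  assert (Hex_shift : ex_pseries (shiftX 0 c) t).
  { apply (ex_pseries_ext (PS_incr_1 c)); [intros [|k]; reflexivity|].
    apply ex_pseries_incr_1. now apply (abs_summable_ex_pseries r). }
  rewrite (PSeries_ext _ (PS_opp (PS_plus (PS_plus (PS_mult c (PS_mult c c)) (PS_scal a c))
                                          (shiftX 0 c))))
    by (intros k; rewrite PS_derive_n_ode_coef; reflexivity).
  assert (Hrad : forall b, abs_summable r b -> Rbar_lt (Rabs t) (CV_radius b))
    by (intros b Hb; apply (abs_summable_CV_radius r); auto).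
  assert (Hex : forall b, abs_summable r b -> ex_pseries b t)
    by (intros b Hb; now apply (abs_summable_ex_pseries r)).
  rewrite PSeries_opp, !PSeries_plus, PSeries_scal, Hshift, !PSeries_mult; auto.
  - unfold t, opp; simpl; ring.
  - apply ex_pseries_scal; auto using Rmult_comm.
  - apply ex_pseries_plus; auto. apply ex_pseries_scal; auto using Rmult_comm.
Qed.
End RealTaylorSeries.

(* [init_coef a x1 x2 k] is the [k]-th derivative prescribed at [z = a], divided by [k!]. *)
Definition init_coef (a x1 x2 : R) (n : nat) : R :=
  match n with
  | O => Rpower a (1 / 2) * x1
  | 1%nat => - (Rpower a (3 / 4) / sqrt 2) * (x1 + x2)
  | 2%nat => a * x2 / 2
  | _ => Rpower a (5 / 4) / sqrt 2 * (x1 - x2) / 6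
  end.

Definition taylor_coef (a x1 x2 : R) : nat -> R :=
  ode_coef 0 Rplus Rmult Rmult a (init_coef a x1 x2).

Section TaylorSolution.
Variables a x1 x2 r : R.
Hypotheses (r_gt0 : 0 < r) (coef_summable : abs_summable r (taylor_coef a x1 x2)).

Lemma taylor_solves_ODE_on (lo hi : R) :
  (forall z, lo - 1 < z < hi + 1 -> Rabs (z - a) < r) ->
  solves_ODE_on (fun z => PSeries (taylor_coef a x1 x2) (z - a)) lo hi.
Proof.
  intros Hr. split.
  - exists 1. split; [lra|]. intros z Hz k _.
    apply (ex_derive_n_ode_series a (init_coef a x1 x2) r); auto.
  - intros z Hz. apply (ode_series_solves a (init_coef a x1 x2) r); auto. apply Hr. lra.
Qed.

Lemma taylor_initial_data :
  initial_data (fun z => PSeries (taylor_coef a x1 x2) (z - a)) a x1 x2.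
Proof.
  assert (Hsqrt : 0 < sqrt 2) by (apply sqrt_lt_R0; lra).
  assert (Hinit : forall k, (k < 4)%nat -> taylor_coef a x1 x2 k = init_coef a x1 x2 k)
    by (intros; now apply ode_coef_init).
  assert (Hder : forall k, Derive_n (fun z => PSeries (taylor_coef a x1 x2) (z - a)) k a =
                           taylor_coef a x1 x2 k * INR (Factorial.fact k))
    by (intros; now apply (Derive_n_ode_series_at a (init_coef a x1 x2) r)).
  unfold initial_data. rewrite !Hder, !Hinit by lia.
  rewrite Rminus_diag, PSeries_0, Hinit by lia. simpl. repeat split; field; lra.
Qed.

End TaylorSolution.

(* [groot_bound] dominates the norm of the series of [gfun ^ (1/10)], [a_bound] dominates
   [a_pm] on both sides, so [weight / 2] dominates the series of [z - a_pm] and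
   [3 / 4 * weight] exceeds the length of [-a_-, a_+] plus one. *)
Definition groot_bound (nu : R) : R := 2 * (1 + 1 / (4 * nu ^ 2)).

Definition a_bound (nu_m nu_p : R) : R := 1 + 1 / (4 * nu_m ^ 2) + 1 / (4 * nu_p ^ 2).

Definition weight (nu_m nu_p : R) : R := 2 * (2 * a_bound nu_m nu_p + groot_bound nu_p ^ 4 + 1).

Section Construction.
Variables nu_m nu_p : R.
Hypotheses (nu_m_gt0 : 0 < nu_m) (nu_p_gt0 : 0 < nu_p).

Let Q := groot_bound nu_p.
Let rho := weight nu_m nu_p.

Lemma groot_bound_ge1 : 1 <= Q.
Proof.
  unfold Q, groot_bound. assert (0 < 1 / (4 * nu_p ^ 2)) by (apply Rdiv_lt_0_compat; nra).
  lra.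
Qed.

Lemma a_bound_ge1 : 1 <= a_bound nu_m nu_p.
Proof.
  unfold a_bound. assert (0 < 1 / (4 * nu_m ^ 2)) by (apply Rdiv_lt_0_compat; nra).
  assert (0 < 1 / (4 * nu_p ^ 2)) by (apply Rdiv_lt_0_compat; nra). lra.
Qed.

Lemma weight_ge1 : 1 <= rho.
Proof.
  unfold rho, weight. fold Q. pose proof a_bound_ge1.
  pose proof (pow_R1_Rle Q 4 groot_bound_ge1). lra.
Qed.

Lemma a_pm_in_bounds (d : R) : 0 < d <= 1 ->
  0 < a_pm d nu_m <= a_bound nu_m nu_p /\ 0 < a_pm d nu_p <= a_bound nu_m nu_p.
Proof.
  intros Hd. pose proof (a_pm_le d nu_m Hd nu_m_gt0). pose proof (a_pm_le d nu_p Hd nu_p_gt0).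
  assert (0 < 1 / (4 * nu_m ^ 2)) by (apply Rdiv_lt_0_compat; nra).
  assert (0 < 1 / (4 * nu_p ^ 2)) by (apply Rdiv_lt_0_compat; nra).
  unfold a_bound. repeat split; try apply exp_pos; lra.
Qed.

(* [e0] and [K] as provided by [majorant_bounded]. *)
Variables e0 K : R.
Hypothesis e0_gt0 : 0 < e0.
Hypothesis majorant : forall w : nat -> R,
  (forall n, 0 <= w n) -> (forall i, (i < 4)%nat -> w i <= e0) ->
  (forall p, rising4 p * w (p + 4)%nat <=
               rho ^ 4 * PS_mult w (PS_mult w w) p
               + rho ^ 4 * (Q ^ 4 + rho) * (w p + shiftX 0 w p)) ->
  forall n, w n <= K.

Definition data_bound : R := e0 / (2 * Q ^ 5 * rho ^ 3).

Lemma data_bound_gt0 : 0 < data_bound.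
Proof.
  pose proof groot_bound_ge1. pose proof weight_ge1.
  apply Rdiv_lt_0_compat; auto. apply Rmult_lt_0_compat; [|apply pow_lt]; [|lra].
  apply Rmult_lt_0_compat; [lra|apply pow_lt; lra].
Qed.

Variables dl x1 x2 : R.
Hypotheses (dl_bound : 1 / 3 <= dl <= 1)
  (x1_le : Rabs x1 <= data_bound) (x2_le : Rabs x2 <= data_bound).

Let r := delta_radius.
Let s := groot_coef nu_p dl.

(* Since [a_pm ^ (k / 4) = s ^ k] with [s] the series of [gfun ^ (1/10)] (see
   [Rpower_a_pm]), the initial data are power series in [delta - dl]. *)
Definition init_series (n : nat) : nat -> R :=
  match n with
  | O => PS_scal x1 (ps_pow s 2)
  | 1%nat => PS_scal (- (x1 + x2) / sqrt 2) (ps_pow s 3)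
  | 2%nat => PS_scal (x2 / 2) (ps_pow s 4)
  | _ => PS_scal ((x1 - x2) / (6 * sqrt 2)) (ps_pow s 5)
  end.

Definition coef_series : nat -> nat -> R :=
  ode_coef (ps_const 0) PS_plus PS_mult PS_scal (ps_pow s 4) init_series.

Lemma s_summable : abs_summable r s /\ wnorm r s <= Q.
Proof.
  destruct (groot_coef_spec nu_p dl nu_p_gt0 dl_bound) as [Hs [Hn _]]. split; auto.
  eapply Rle_trans; [exact Hn|]. unfold Q, groot_bound. apply Rmult_le_compat_l; [lra|].
  eapply Rle_trans; [apply Rpower_le_1plus; [apply gfun_gt0|]; lra|].
  apply Rplus_le_compat_l, gfun_le; lra.
Qed.

Lemma wnorm_s_pow_le (k : nat) : abs_summable r (ps_pow s k) /\ wnorm r (ps_pow s k) <= Q ^ k.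
Proof.
  destruct s_summable as [Hs Hn].
  destruct (abs_summable_pow r delta_radius_gt0 s k Hs) as [Hk Hkn]. split; auto.
  eapply Rle_trans; [exact Hkn|]. apply pow_incr. split; auto using wnorm_ge0, delta_radius_gt0.
Qed.

Lemma init_series_summable (n : nat) : abs_summable r (init_series n).
Proof.
  destruct n as [|[|[|n]]]; apply abs_summable_scal, wnorm_s_pow_le.
Qed.

Lemma coef_series_summable (n : nat) : abs_summable r (coef_series n).
Proof.
  pose proof delta_radius_gt0.
  apply (P_ode_coef _ _ _ _ _ _ _ (abs_summable r)); intros.
  - apply abs_summable_const.
  - now apply abs_summable_plus.
  - now apply abs_summable_mult.
  - now apply abs_summable_scal.
  - apply wnorm_s_pow_le.
  - apply init_series_summable.
Qed.

Lemma gfun_near_dl_gt0 (x : R) : Rabs x < r -> 0 < gfun (dl + x) nu_p.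
Proof.
  intros Hx. apply gfun_gt0; auto. apply Rabs_def2 in Hx. unfold r, delta_radius in Hx. lra.
Qed.

Lemma PSeries_s_pow (x : R) (k : nat) : Rabs x < r ->
  PSeries (ps_pow s k) x = Rpower (gfun (dl + x) nu_p) (1 / 10) ^ k.
Proof.
  intros Hx. destruct (groot_coef_spec nu_p dl nu_p_gt0 dl_bound) as [Hs [_ Hev]].
  unfold s. rewrite (PSeries_ps_pow r), Hev; auto using delta_radius_gt0.
Qed.

Lemma PSeries_coef_series (x : R) (n : nat) : Rabs x < r ->
  PSeries (coef_series n) x = taylor_coef (a_pm (dl + x) nu_p) x1 x2 n.
Proof.
  intros Hx. pose proof delta_radius_gt0 as Hr. pose proof (gfun_near_dl_gt0 x Hx) as Hg.
  assert (Hsqrt : 0 < sqrt 2) by (apply sqrt_lt_R0; lra).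
  apply (phi_ode_coef _ _ _ _ _ _ _ _ _ _ _ _ _ _ (abs_summable r))
    with (phi := fun f => PSeries f x);
    intros.
  - apply abs_summable_const.
  - now apply abs_summable_plus.
  - now apply abs_summable_mult.
  - now apply abs_summable_scal.
  - apply wnorm_s_pow_le.
  - apply init_series_summable.
  - apply PSeries_ps_const.
  - apply PSeries_plus; now apply (abs_summable_ex_pseries r); [|lra].
  - apply PSeries_mult; now apply (abs_summable_CV_radius r).
  - apply PSeries_scal.
  - now rewrite PSeries_s_pow, <- a_pm_root10.
  - destruct n0 as [|[|[|[|n0]]]]; try lia; cbn [init_series init_coef];
      rewrite PSeries_scal, PSeries_s_pow by auto.
    + rewrite (Rpower_a_pm _ _ _ 2) by (auto; simpl; field). ring.
    + rewrite (Rpower_a_pm _ _ _ 3) by (auto; simpl; field). field. lra.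
    + rewrite (a_pm_root10 _ _ Hg). field.
    + rewrite (Rpower_a_pm _ _ _ 5) by (auto; simpl; field). field. lra.
Qed.

Lemma wnorm_init_series_le (i : nat) : (i < 4)%nat -> wnorm r (init_series i) * rho ^ i <= e0.
Proof.
  intros Hi. pose proof groot_bound_ge1. pose proof weight_ge1.
  assert (Hsqrt : 1 <= sqrt 2) by (rewrite <- sqrt_1; apply sqrt_le_1_alt; lra).
  assert (Hdb : 0 <= data_bound) by (eapply Rle_trans; [apply Rabs_pos|exact x1_le]).
  assert (Hterm : forall c j, Rabs c <= 2 * data_bound -> (j <= 5)%nat ->
                    wnorm r (PS_scal c (ps_pow s j)) <= 2 * data_bound * Q ^ 5).
  { intros c j Hc Hj. destruct (wnorm_s_pow_le j) as [Hsj Hnj].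
    rewrite (proj2 (abs_summable_scal r c _ Hsj)).
    assert (Q ^ j <= Q ^ 5) by (apply Rle_pow; auto).
    apply Rmult_le_compat; auto using Rabs_pos, wnorm_ge0, delta_radius_gt0; lra. }
  assert (Hcoef : wnorm r (init_series i) <= 2 * data_bound * Q ^ 5).
  { assert (Hdiv : forall u v, 1 <= v -> Rabs u <= 2 * data_bound ->
                               Rabs (u / v) <= 2 * data_bound).
    { intros u v Hv Hu. unfold Rdiv. rewrite Rabs_mult, Rabs_inv, (Rabs_pos_eq v) by lra.
      apply Rle_trans with (Rabs u * 1); [|lra]. apply Rmult_le_compat_l; [apply Rabs_pos|].
      rewrite <- Rinv_1. apply Rinv_le_contravar; lra. }
    pose proof (Rabs_triang x1 x2). pose proof (Rabs_triang x1 (- x2)). rewrite Rabs_Ropp in *.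
    destruct i as [|[|[|[|i]]]]; try lia; cbn [init_series]; apply Hterm; try lia.
    - lra.
    - apply Hdiv; auto. rewrite Rabs_Ropp. lra.
    - apply Hdiv; lra.
    - apply Hdiv; [lra|]. unfold Rminus. lra. }
  unfold data_bound in Hcoef.
  assert (Hr3 : rho ^ i <= rho ^ 3) by (apply Rle_pow; auto; lia).
  assert (HQ5 : 0 < Q ^ 5) by (apply pow_lt; lra).
  assert (Hrho3 : 0 < rho ^ 3) by (apply pow_lt; lra).
  replace e0 with (2 * (e0 / (2 * Q ^ 5 * rho ^ 3)) * Q ^ 5 * rho ^ 3) by (field; lra).
  apply Rmult_le_compat; [apply wnorm_ge0|apply pow_le; lra|exact Hcoef|exact Hr3];
    auto using delta_radius_gt0, init_series_summable.
Qed.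

Lemma wnorm_coef_series_le (n : nat) : wnorm r (coef_series n) * rho ^ n <= K.
Proof.
  pose proof delta_radius_gt0 as Hr. pose proof weight_ge1.
  set (m := fun n => wnorm r (coef_series n)).
  assert (Hm : forall n, 0 <= m n) by (intros; apply wnorm_ge0; auto using coef_series_summable).
  apply (majorant (fun n => m n * rho ^ n)).
  - intros k. apply Rmult_le_pos; [apply Hm|apply pow_le; lra].
  - intros i Hi. unfold m, coef_series. rewrite ode_coef_init by auto.
    now apply wnorm_init_series_le.
  - intros p. pose proof groot_bound_ge1.
    apply (weighted_coef_rec m (Q ^ 4) rho p); [apply pow_le; lra|lra|exact Hm|].
    assert (Hrec : rising4 p * m (p + 4)%nat <=
                   PS_mult m (PS_mult m m) p + wnorm r (ps_pow s 4) * m p + shiftX 0 m p).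
    { apply (nu_ode_coef_rec _ (ps_const 0) PS_plus PS_mult PS_scal (ps_pow s 4) init_series
               (abs_summable r)); intros.
      - apply abs_summable_const.
      - now apply abs_summable_plus.
      - now apply abs_summable_mult.
      - now apply abs_summable_scal.
      - apply wnorm_s_pow_le.
      - apply init_series_summable.
      - rewrite (proj2 (abs_summable_const r 0)). apply Rabs_R0.
      - now apply abs_summable_plus.
      - now apply abs_summable_mult.
      - now apply abs_summable_scal.
      - now apply wnorm_ge0. }
    eapply Rle_trans; [exact Hrec|].
    apply Rplus_le_compat_r, Rplus_le_compat_l, Rmult_le_compat_r; [apply Hm|apply wnorm_s_pow_le].
Qed.

Lemma taylor_coef_summable : abs_summable (3 / 4 * rho) (taylor_coef (a_pm dl nu_p) x1 x2).
Proof.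
  pose proof delta_radius_gt0 as Hr. pose proof weight_ge1.
  apply (ex_series_le_R _ (fun n => K * (3 / 4) ^ n)).
  - intros n. rewrite Rabs_pos_eq by (apply Rmult_le_pos; [apply Rabs_pos|apply pow_le; lra]).
    rewrite Rpow_mult_distr, (Rmult_comm ((3 / 4) ^ n)), <- Rmult_assoc.
    apply Rmult_le_compat_r; [apply pow_le; lra|].
    eapply Rle_trans; [|apply wnorm_coef_series_le].
    apply Rmult_le_compat_r; [apply pow_le; lra|].
    rewrite <- (Rplus_0_r dl), <- PSeries_coef_series by (rewrite Rabs_R0; auto).
    apply (Rabs_PSeries_le_wnorm r); auto using coef_series_summable.
    rewrite Rabs_R0. now apply Rlt_le.
  - apply (ex_series_scal_l K (fun n => (3 / 4) ^ n)), ex_series_geom.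
    rewrite Rabs_pos_eq; lra.
Qed.

Definition recentre_series (z : R) : nat -> R :=
  PS_plus (ps_const z) (PS_scal (-1) (ps_pow s 4)).

Lemma recentre_series_summable (z : R) : Rabs z <= a_bound nu_m nu_p ->
  abs_summable r (recentre_series z) /\ wnorm r (recentre_series z) <= rho / 2.
Proof.
  intros Hz. pose proof delta_radius_gt0 as Hr.
  destruct (wnorm_s_pow_le 4) as [Hs4 Hn4].
  destruct (abs_summable_scal r (-1) _ Hs4) as [Hscal Hnscal].
  destruct (abs_summable_plus r Hr _ _ (proj1 (abs_summable_const r z)) Hscal) as [HsT HnT].
  split; auto.
  rewrite Hnscal, (proj2 (abs_summable_const r z)) in HnT.
  replace (Rabs (-1)) with 1 in HnT by (rewrite Rabs_left; lra).
  pose proof a_bound_ge1. pose proof (pow_R1_Rle Q 4 groot_bound_ge1).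
  unfold recentre_series, rho, weight. fold Q. lra.
Qed.

Lemma PSeries_recentre_series (z x : R) : Rabs x < r ->
  PSeries (recentre_series z) x = z - a_pm (dl + x) nu_p.
Proof.
  intros Hx. pose proof delta_radius_gt0 as Hr.
  destruct (wnorm_s_pow_le 4) as [Hs4 _].
  assert (Hex : forall b, abs_summable r b -> ex_pseries b x)
    by (intros b Hb; apply (abs_summable_ex_pseries r); auto; lra).
  unfold recentre_series.
  rewrite PSeries_plus, PSeries_ps_const, PSeries_scal, PSeries_s_pow, <- a_pm_root10;
    auto using gfun_near_dl_gt0.
  - ring.
  - apply Hex, abs_summable_const.
  - apply Hex, abs_summable_scal, Hs4.
Qed.

(* The [n]-th term of the [z]-series, [c_n(delta) (z - a_pm delta nu_p) ^ n], as a power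
   series in [delta - dl]. *)
Definition term_series (z : R) (n : nat) : nat -> R :=
  PS_mult (coef_series n) (ps_pow (recentre_series z) n).

Lemma term_series_summable (z : R) (n : nat) : Rabs z <= a_bound nu_m nu_p ->
  abs_summable r (term_series z n) /\ wnorm r (term_series z n) <= K * (1 / 2) ^ n.
Proof.
  intros Hz. pose proof delta_radius_gt0 as Hr. pose proof weight_ge1.
  destruct (recentre_series_summable z Hz) as [HsT HnT].
  destruct (abs_summable_pow r Hr _ n HsT) as [HTn HnTn].
  destruct (abs_summable_mult r Hr _ _ (coef_series_summable n) HTn) as [HFn HnFn].
  split; auto. eapply Rle_trans; [exact HnFn|].
  assert (Hpow : wnorm r (ps_pow (recentre_series z) n) <= (rho / 2) ^ n).
  { eapply Rle_trans; [exact HnTn|]. apply pow_incr. split; auto using wnorm_ge0. }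
  apply Rle_trans with (wnorm r (coef_series n) * rho ^ n * (1 / 2) ^ n).
  - rewrite Rmult_assoc, <- Rpow_mult_distr. replace (rho * (1 / 2)) with (rho / 2) by field.
    apply Rmult_le_compat_l; auto using wnorm_ge0, coef_series_summable.
  - apply Rmult_le_compat_r; [apply pow_le; lra|apply wnorm_coef_series_le].
Qed.

Lemma taylor_analytic_in_delta (z : R) : Rabs z <= a_bound nu_m nu_p ->
  analytic_at (fun d => PSeries (taylor_coef (a_pm d nu_p) x1 x2) (z - a_pm d nu_p)) dl.
Proof.
  intros Hz. pose proof delta_radius_gt0 as Hr.
  assert (Hsum : ex_series (fun n => wnorm r (term_series z n))).
  { apply (ex_series_le_R _ (fun n => K * (1 / 2) ^ n)).
    - intros n. destruct (term_series_summable z n Hz) as [Hs Hn].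
      rewrite Rabs_pos_eq; auto using wnorm_ge0.
    - apply (ex_series_scal_l K (fun n => (1 / 2) ^ n)), ex_series_geom.
      rewrite Rabs_pos_eq; lra. }
  destruct (abs_summable_Series r Hr (term_series z)
              (fun n => proj1 (term_series_summable z n Hz)) Hsum) as [_ [_ Hev]].
  exists r. split; auto. exists (fun k => Series (fun n => term_series z n k)).
  intros y Hy.
  replace (PSeries (taylor_coef (a_pm y nu_p) x1 x2) (z - a_pm y nu_p))
    with (Series (fun n => PSeries (term_series z n) (y - dl))); [now apply Hev|].
  apply Series_ext. intros n. unfold term_series.
  destruct (recentre_series_summable z Hz) as [HsT _].
  destruct (abs_summable_pow r Hr _ n HsT) as [HTn _].
  assert (Hrad : forall b, abs_summable r b -> Rbar_lt (Rabs (y - dl)) (CV_radius b))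
    by (intros b Hb; now apply (abs_summable_CV_radius r)).
  rewrite PSeries_mult, PSeries_coef_series, (PSeries_ps_pow r Hr), PSeries_recentre_series
    by auto using coef_series_summable.
  now replace (dl + (y - dl)) with y by ring.
Qed.

End Construction.

Lemma Rabs_le_sqrt_sum_sq (x y : R) :
  Rabs x <= sqrt (x ^ 2 + y ^ 2) /\ Rabs y <= sqrt (x ^ 2 + y ^ 2).
Proof.
  split; rewrite <- sqrt_Rsqr_abs; apply sqrt_le_1_alt; unfold Rsqr; nra.
Qed.

Theorem lemma12 (nu_m nu_p : R) (Hm : 0 < nu_m) (Hp : 0 < nu_p) :
  exists k1 : R, 0 < k1 /\
  exists A : R -> R -> R -> R -> R,   (* A delta x10 x20 z *)
    forall delta x10 x20 : R,
      1/3 <= delta <= 1 ->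
      sqrt (x10 ^ 2 + x20 ^ 2) <= k1 ->
      solves_ODE_on (A delta x10 x20) (- a_pm delta nu_m) (a_pm delta nu_p) /\
      initial_data (A delta x10 x20) (a_pm delta nu_p) x10 x20 /\
      (forall z : R, - a_pm delta nu_m <= z <= a_pm delta nu_p ->
         analytic_at (fun d => A d x10 x20 z) delta).
Proof.
  pose proof (weight_ge1 nu_m nu_p Hm Hp) as Hrho. pose proof (groot_bound_ge1 nu_p Hp) as HQ.
  set (rho := weight nu_m nu_p) in *. set (Q := groot_bound nu_p) in *.
  assert (Hrho4 : 0 <= rho ^ 4) by (apply pow_le; lra).
  assert (HQ4 : 1 <= Q ^ 4) by (apply pow_R1_Rle; lra).
  destruct (majorant_bounded (rho ^ 4) (rho ^ 4 * (Q ^ 4 + rho)) Hrho4) as [e0 [K [He0 HK]]];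
    [apply Rmult_le_pos; lra|].
  exists (data_bound nu_m nu_p e0). split; [now apply data_bound_gt0|].
  exists (fun d x1 x2 z => PSeries (taylor_coef (a_pm d nu_p) x1 x2) (z - a_pm d nu_p)).
  intros dl x1 x2 Hdl Hx.
  destruct (Rabs_le_sqrt_sum_sq x1 x2) as [Hx1 Hx2].
  destruct (a_pm_in_bounds nu_m nu_p Hm Hp dl) as [[Ham Hamb] [Hap Hapb]]; [lra|].
  pose proof (taylor_coef_summable nu_m nu_p Hm Hp e0 K HK dl x1 x2 Hdl
                ltac:(lra) ltac:(lra)) as Hsum.
  pose proof (a_bound_ge1 nu_m nu_p Hm Hp).
  split; [|split].
  - apply (taylor_solves_ODE_on _ _ _ (3 / 4 * rho)); [lra|exact Hsum|].
    intros z Hz. apply Rabs_def1; unfold rho, weight; fold Q; lra.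
  - apply (taylor_initial_data _ _ _ (3 / 4 * rho)); [lra|exact Hsum].
  - intros z Hz. apply (taylor_analytic_in_delta nu_m nu_p Hm Hp e0 K HK); auto; try lra.
    apply Rabs_le; lra.
Qed.
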